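(* Assume $\mu<0$ and conditions (C1) and (C2). For $T\ge1$ let $\mu^*_T=\mathbb E^*_{\pi^*}(f(X_1,Y_{1+T}))$. Then the limit $\mu^*_\infty=\lim_{T\to\infty}\mu^*_T$ exists (and equals $\pi^*_1\otimes\pi^*_2(f)$, $\pi^*_1,\pi^*_2$ the marginals of $\pi^*$), and $\mu^*_\infty<\mu^*:=\pi^*(f)$.
   Context: Let $E$ be a finite set and $P,Q$ irreducible aperiodic stochastic $E\times E$ matrices with invariant probability vectors $\pi_P,\pi_Q$; $\pi=\pi_P\otimes\pi_Q$. Let $f:E\times E\to\mathbb Z$ with gcd of its values equal to $1$; $\nu(f)=\sum f\,d\nu$; $\mu=\pi(f)$. A cycle w.r.t. $P$ is a sequence $x_1,\dots,x_n$ with $P(x_k,x_{k+1})>0$ for all $k$, indices mod $n$. (C1): for some $n\ge1$ there are cycles $x_1,\dots,x_n$ w.r.t. $P$ and $y_1,\dots,y_n$ w.r.t. $Q$ with $\sum_kf(x_k,y_k)>0$. (C2): for every $T\ge1$ there are $n\ge1$ and cycles $x_1,\dots,x_n$ w.r.t. $P$ and $y_1,\dots,y_n$ w.r.t. $Q$ with $\sum_kf(x_k,y_k)\ne\sum_kf(x_k,y_{k+T\bmod n})$. Let $\Phi(\theta)_{(x,y),(x',y')}=e^{\theta f(x',y')}P_{x,x'}Q_{y,y'}$, $\varphi(\theta)$ its spectral radius, $\theta^*>0$ the unique positive solution of $\varphi(\theta)=1$, $r^*$ a positive right eigenvector of $\Phi(\theta^* )$ for eigenvalue 1, $R^*_{(x,y),(x',y')}=\frac{r^*(x',y')}{r^*(x,y)}\Phi(\theta^*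 )_{(x,y),(x',y')}$, and $\pi^*$ the invariant probability vector of $R^*$. $\mathbb P^*_{\pi^*}$ (expectation $\mathbb E^*_{\pi^*}$) is the law under which $(X_n,Y_n)_{n\ge0}$ is a stationary Markov chain on $E^2$ with transition matrix $R^*$. *)

From HB Require Import structures.
From mathcomp Require Import all_boot all_order all_algebra.
From mathcomp Require Import all_classical all_reals all_analysis.
From mathcomp Require Import complex.
Set Implicit Arguments. Unset Strict Implicit. Unset Printing Implicit Defensive.
Import Order.TTheory GRing.Theory Num.Theory.
Local Open Scope ring_scope.
Local Open Scope classical_set_scope.

Section MarkovDefs.
Variable R : realType.

Definition fmx_one (T : finType) : T -> T -> R :=
  fun x y => if x == y then 1 else 0.

Fixpoint fmx_pow (T : finType) (A : T -> T -> R) (n : nat) : T -> T -> R :=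
  match n with
  | 0 => @fmx_one T
  | m.+1 => fun x y => \sum_(z : T) fmx_pow A m x z * A z y
  end.

Definition stochastic (T : finType) (A : T -> T -> R) : Prop :=
  (forall x y, 0 <= A x y) /\ (forall x, \sum_(y : T) A x y = 1).

Definition irreducible (T : finType) (A : T -> T -> R) : Prop :=
  forall x y, exists n : nat, 0 < fmx_pow A n x y.

(* aperiodic: for every state x, gcd {n >= 1 | A^n(x,x) > 0} = 1, i.e. no
   d >= 2 divides all return times of x *)
Definition aperiodic (T : finType) (A : T -> T -> R) : Prop :=
  forall (x : T) (d : nat), (1 < d)%N ->
    ~ (forall n : nat, (0 < n)%N -> 0 < fmx_pow A n x x -> (d %| n)%N).

Definition invariant_prob (T : finType) (A : T -> T -> R) (p : T -> R) : Prop :=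
  [/\ forall x, 0 <= p x, \sum_(x : T) p x = 1
    & forall y, \sum_(x : T) p x * A x y = p y].

Definition is_cycle (T : finType) (A : T -> T -> R) (n : nat) (x : nat -> T) : Prop :=
  (0 < n)%N /\ forall k : nat, (k < n)%N -> 0 < A (x k) (x (k.+1 %% n)%N).

Definition cmx_of (T : finType) (A : T -> T -> R) : 'M[R[i]]_#|T| :=
  \matrix_(i < #|T|, j < #|T|) ((A (enum_val i) (enum_val j))%:C)%C.

Definition spectral_radius (T : finType) (A : T -> T -> R) : R :=
  sup [set ComplexField.Normc.normc z | z in [set z : R[i] | root (char_poly (cmx_of A)) z]].

Definition Phi (E : finType) (P Q : E -> E -> R) (f : E -> E -> int) (theta : R)
  : (E * E)%type -> (E * E)%type -> R :=
  fun s s' => expR (theta * (f s'.1 s'.2)%:~R) * P s.1 s'.1 * Q s.2 s'.2.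

Definition tilted (E : finType) (P Q : E -> E -> R) (f : E -> E -> int) (theta : R)
  (r : (E * E)%type -> R) : (E * E)%type -> (E * E)%type -> R :=
  fun s s' => r s' / r s * Phi P Q f theta s s'.

(* E_{pi}(f(X_1, Y_{1+T})) for the stationary chain with transition matrix A
   and initial (= stationary) law p: (X_1,Y_1) ~ p and
   (X_{1+T},Y_{1+T}) | (X_1,Y_1)=s ~ A^T(s, .) *)
Definition lagged_mean (E : finType) (A : (E * E)%type -> (E * E)%type -> R)
  (p : (E * E)%type -> R) (f : E -> E -> int) (T : nat) : R :=
  \sum_(s : E * E) \sum_(s' : E * E) p s * fmx_pow A T s s' * (f s.1 s'.2)%:~R.

End MarkovDefs.

(* Write R, r, pi, theta for R*, r*, pi*, theta*. The tilted chain
   R = diag(r)^-1 Phi(theta) diag(r) is stochastic, and primitive because P and Q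
   are, so by Doeblin's contraction R^T converges to the rank-one projection onto
   pi; averaging f(X_1, Y_(1+T)) then gives the limit pi_1 (x) pi_2 (f).

   For the inequality let A, B be the transition matrices of the two coordinates
   of the stationary chain (pi, R) and K = A (x) B, which is stationary for
   pi_1 (x) pi_2 and has the same coordinate flows as R. Since
   ln R(s, s') = ln r(s') - ln r(s) + theta f(s') + ln P + ln Q, the one-step mean
   of ln (R / K) is theta times the mean of f plus a constant depending only on
   these flows, for both chains (pi, R) and (pi_1 (x) pi_2, K). By Gibbs'
   inequality it is >= 0 for the first and < 0 for the second unless K = R; and
   K = R is excluded by (C2) for T = 1, comparing the products of R along the
   cycles (x, y) and (x, y shifted by one). *)

From HB Require Import structures.
From mathcomp Require Import all_boot all_order all_algebra.
From mathcomp Require Import all_classical all_reals all_analysis.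
From mathcomp Require Import complex.
From mathcomp Require Import zify ring lra.
Set Implicit Arguments. Unset Strict Implicit. Unset Printing Implicit Defensive.
Import Order.TTheory GRing.Theory Num.Theory.
Local Open Scope ring_scope.
Local Open Scope classical_set_scope.

Section NumericalSemigroup.
Variable S : nat -> Prop.
Hypotheses (S0 : S 0%N) (SD : forall a b, S a -> S b -> S (a + b)%N)
  (S_gcd1 : forall d, (1 < d)%N -> ~ (forall n, (0 < n)%N -> S n -> (d %| n)%N)).

Lemma semigroupM k a : S a -> S (k * a)%N.
Proof. by move=> Sa; elim: k => [|k IH]; rewrite ?mul0n // mulSn; apply: SD. Qed.

(* The least positive difference g of two elements of S divides every element
   of S, so g = 1. *)
Lemma semigroup_consecutive : exists a b, [/\ S a, S b & a = b.+1].
Proof.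
have [n0 [n0_gt0 Sn0]] : exists n, (0 < n)%N /\ S n.
  apply: contrapT => noS; apply: (S_gcd1 (d := 2)) => // n n_gt0 Sn.
  by case: noS; exists n.
pose D g := exists a b, [/\ S a, S b & a = (b + g)%N].
have exD : exists g, `[< (0 < g)%N /\ D g >].
  by exists n0; apply/asboolP; split=> //; exists n0, 0%N; rewrite add0n.
case: (ex_minnP exD) => g /asboolP [g_gt0 [a [b [Sa Sb eab]]]] gmin.
have g_dvd n : (0 < n)%N -> S n -> (g %| n)%N.
  move=> n_gt0 Sn; apply: contraT => g_ndvd.
  have : (g <= n %% g)%N.
    apply: gmin; apply/asboolP; split; first by rewrite lt0n.
    exists (n + n %/ g * b)%N, (n %/ g * a)%N.
    split; [exact: SD (semigroupM _ Sb) | exact: semigroupM |].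
    by rewrite {1}(divn_eq n g) eab mulnDr; lia.
  by rewrite leqNgt ltn_mod g_gt0.
have g1 : g = 1%N.
  apply/eqP; rewrite eqn_leq g_gt0 andbT leqNgt; apply/negP => g_gt1.
  exact: (S_gcd1 g_gt1 g_dvd).
by exists a, b; split; rewrite // eab g1 addn1.
Qed.

Lemma semigroup_eventually : exists N, forall n, (N <= n)%N -> S n.
Proof.
have [a [b [Sa Sb eab]]] := semigroup_consecutive; subst a.
exists (b * b)%N => n bb_le_n.
have [b0|b_gt0] := posnP b; first by rewrite -[n]muln1; apply: semigroupM; rewrite b0 in Sa.
have b_le_q : (b <= n %/ b)%N by rewrite leq_divRL.
have r_lt_b : (n %% b < b)%N by rewrite ltn_mod.
(* n = q b + r with r < b <= q, hence n = (q - r) b + r (b + 1). *)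
have -> : n = ((n %/ b - n %% b) * b + n %% b * b.+1)%N.
  by rewrite {1}(divn_eq n b) mulnBl mulnS; nia.
by apply: SD; apply: semigroupM.
Qed.

End NumericalSemigroup.

Lemma eventually_forall_fin (I : finType) (Pr : I -> nat -> Prop) :
  (forall i, exists N, forall n, (N <= n)%N -> Pr i n) ->
  exists N, forall n, (N <= n)%N -> forall i, Pr i n.
Proof.
move=> /choice [N hN]; exists (\max_i N i) => n le_n i.
by apply: hN; apply: leq_trans le_n; apply: leq_bigmax.
Qed.

Section PositiveSums.
Variables (R : numDomainType) (I : finType) (F : I -> R).
Hypothesis F_ge0 : forall i, 0 <= F i.

Lemma psumr_gt0 i : 0 < F i -> 0 < \sum_j F j.
Proof. by move=> Fi_gt0; rewrite (bigD1 i) //= ltr_pwDl // sumr_ge0. Qed.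

Lemma psumr_gt0P : 0 < \sum_j F j -> exists i, 0 < F i.
Proof.
by move=> /gt_eqF/negbT/eqP/(psumr_neq0P (fun i _ => F_ge0 i)) [i /andP[_ ?]]; exists i.
Qed.

End PositiveSums.

Section FiniteMatrixPowers.
Variables (R : realType) (T : finType).
Implicit Types (A : T -> T -> R) (p : T -> R).

Lemma fmx_pow_ge0 A n x y : (forall a b, 0 <= A a b) -> 0 <= fmx_pow A n x y.
Proof.
move=> A_ge0; elim: n x y => [|n IH] x y /=; first by rewrite /fmx_one; case: eqP.
by apply: sumr_ge0 => z _; rewrite mulr_ge0.
Qed.

Lemma fmx_powD A m n x y :
  fmx_pow A (m + n) x y = \sum_z fmx_pow A m x z * fmx_pow A n z y.
Proof.
elim: n x y => [|n IH] x y.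
  rewrite addn0 /= (bigD1 y) //= /fmx_one eqxx mulr1 big1 ?addr0 // => z.
  by rewrite eq_sym => /negbTE ->; rewrite mulr0.
rewrite addnS /=; under eq_bigr do rewrite IH mulr_suml.
rewrite exchange_big /=; apply: eq_bigr => z _; rewrite mulr_sumr.
by apply: eq_bigr => w _; rewrite mulrA.
Qed.

Lemma fmx_powD_gt0 A m n x y z : (forall a b, 0 <= A a b) ->
  0 < fmx_pow A m x z -> 0 < fmx_pow A n z y -> 0 < fmx_pow A (m + n) x y.
Proof.
move=> A_ge0 Am_gt0 An_gt0; rewrite fmx_powD.
apply: (psumr_gt0 _ (i := z)); last exact: mulr_gt0.
by move=> w; rewrite mulr_ge0 ?fmx_pow_ge0.
Qed.

Lemma stochastic_pow A n : stochastic A -> stochastic (fmx_pow A n).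
Proof.
move=> [A_ge0 A1]; split=> [x y|]; first exact: fmx_pow_ge0.
elim: n => [|n IH] x /=.
  rewrite (bigD1 x) //= /fmx_one eqxx big1 ?addr0 // => y.
  by rewrite eq_sym => /negbTE ->.
rewrite exchange_big /= -(IH x); apply: eq_bigr => z _.
by rewrite -mulr_sumr A1 mulr1.
Qed.

Lemma invariant_prob_pow A p n : invariant_prob A p -> invariant_prob (fmx_pow A n) p.
Proof.
case=> p_ge0 p1 p_inv; split=> //; elim: n => [|n IH] y /=.
  rewrite (bigD1 y) //= /fmx_one eqxx mulr1 big1 ?addr0 // => x.
  by move=> /negbTE ->; rewrite mulr0.
under eq_bigr do rewrite mulr_sumr.
rewrite exchange_big /= -p_inv; apply: eq_bigr => z _.
by rewrite -IH mulr_suml; apply: eq_bigr => x _; rewrite mulrA.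
Qed.

Lemma irreducible_aperiodic_pow_gt0 A : (forall a b, 0 <= A a b) ->
  irreducible A -> aperiodic A ->
  exists N, forall n, (N <= n)%N -> forall x y, 0 < fmx_pow A n x y.
Proof.
move=> A_ge0 A_irr A_aper.
have return_eventually x : exists N, forall n, (N <= n)%N -> 0 < fmx_pow A n x x.
  apply: (@semigroup_eventually (fun n => 0 < fmx_pow A n x x)).
  - by rewrite /= /fmx_one eqxx ltr01.
  - by move=> a b; apply: fmx_powD_gt0.
  - by move=> d d_gt1 d_dvd; apply: (A_aper x d d_gt1) => n n_gt0; apply: d_dvd.
have pair_eventually (xy : T * T) :
    exists N, forall n, (N <= n)%N -> 0 < fmx_pow A n xy.1 xy.2.
  have [N hN] := return_eventually xy.1; have [m hm] := A_irr xy.1 xy.2.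
  exists (N + m)%N => n le_n.
  have -> : n = (n - m + m)%N by lia.
  by apply: fmx_powD_gt0 hm => //; apply: hN; lia.
have [N hN] := eventually_forall_fin pair_eventually.
by exists N => n le_n x y; apply: (hN n le_n (x, y)).
Qed.

End FiniteMatrixPowers.

Section Doeblin.
Variables (R : realType) (T : finType).

Definition fmx_mulv (A : T -> T -> R) (v : T -> R) (s : T) : R := \sum_u A s u * v u.

Lemma fmx_mulv_pow0 A v s : fmx_mulv (fmx_pow A 0) v s = v s.
Proof.
rewrite /fmx_mulv /= (bigD1 s) //= /fmx_one eqxx mul1r big1 ?addr0 // => u.
by rewrite eq_sym => /negbTE ->; rewrite mul0r.
Qed.

Lemma fmx_mulv_powD A m n v s :
  fmx_mulv (fmx_pow A (m + n)) v s = fmx_mulv (fmx_pow A m) (fmx_mulv (fmx_pow A n) v) s.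
Proof.
rewrite /fmx_mulv; under eq_bigr do rewrite fmx_powD mulr_suml.
rewrite exchange_big /=; apply: eq_bigr => z _; rewrite mulr_sumr.
by apply: eq_bigr => u _; rewrite mulrA.
Qed.

Lemma convex_comb_bounds (w v : T -> R) lo hi :
  (forall x, 0 <= w x) -> \sum_x w x = 1 -> (forall u, lo <= v u <= hi) ->
  lo <= \sum_x w x * v x <= hi.
Proof.
move=> w_ge0 w1 v_in; rewrite -[lo]mul1r -[hi]mul1r -w1 !mulr_suml.
by apply/andP; split; apply: ler_sum => u _; apply: ler_wpM2l => //; case/andP: (v_in u).
Qed.

(* Minorising every entry of a stochastic matrix by d pulls its values towards
   the average of v, shrinking the width of any interval containing v by the
   factor 1 - #|T| d. *)
Lemma doeblin_bounds A (v : T -> R) lo hi d s :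
  (forall a, \sum_b A a b = 1) -> (forall a b, d <= A a b) ->
  (forall u, lo <= v u <= hi) ->
  (1 - #|T|%:R * d) * lo + d * \sum_u v u <= fmx_mulv A v s <=
  (1 - #|T|%:R * d) * hi + d * \sum_u v u.
Proof.
move=> A1 A_ge v_in.
have -> : fmx_mulv A v s = \sum_u (A s u - d) * v u + d * \sum_u v u.
  by rewrite /fmx_mulv mulr_sumr -big_split /=; apply: eq_bigr => u _; ring.
have -> : 1 - #|T|%:R * d = \sum_u (A s u - d) by rewrite sumrB A1 sumr_const mulr_natl.
rewrite !mulr_suml; apply/andP; split; rewrite lerD2r; apply: ler_sum => u _;
  by apply: ler_wpM2l; rewrite ?subr_ge0 //; case/andP: (v_in u).
Qed.

Variables (M : T -> T -> R) (p : T -> R) (N : nat).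
Hypotheses (M_stoch : stochastic M) (p_inv : invariant_prob M p)
  (MN_gt0 : forall a b, 0 < fmx_pow M N a b).

Let d := \big[Num.min/1]_(ab : T * T) fmx_pow M N ab.1 ab.2.
Let l := 1 - #|T|%:R * d.

Let d_gt0 : 0 < d.
Proof. by apply: lt_bigmin => // ab _; apply: MN_gt0. Qed.

Let d_le a b : d <= fmx_pow M N a b.
Proof. exact: (bigmin_le _ (a, b)). Qed.

Let l_ge0 : 0 <= l.
Proof.
have [T0|/card_gt0P [s0 _]] := posnP #|T|; first by rewrite /l T0 mul0r subr0.
have : \sum_(u : T) d <= \sum_u fmx_pow M N s0 u by apply: ler_sum.
by case: (stochastic_pow N M_stoch) => _ ->; rewrite sumr_const subr_ge0 mulr_natl.
Qed.

Lemma doeblin_contraction k (v : T -> R) : exists lo hi,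
  hi - lo <= l ^+ k * (2 * \sum_w `|v w|) /\
  forall u, lo <= fmx_mulv (fmx_pow M (k * N)) v u <= hi.
Proof.
elim: k => [|k [lo [hi [width v_in]]]].
  exists (- \sum_w `|v w|), (\sum_w `|v w|); split.
    by rewrite expr0 mul1r opprK mulr_natl mulr2n.
  by move=> u; rewrite mul0n fmx_mulv_pow0 -ler_norml (bigD1 u) //= lerDl sumr_ge0.
set S := \sum_u fmx_mulv (fmx_pow M (k * N)) v u.
exists (l * lo + d * S), (l * hi + d * S); split.
  have -> : l * hi + d * S - (l * lo + d * S) = l * (hi - lo) by ring.
  by rewrite exprS -mulrA ler_wpM2l.
move=> u; rewrite mulSn fmx_mulv_powD; apply: doeblin_bounds => //.
by move=> a; case: (stochastic_pow N M_stoch) => _; apply.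
Qed.

Lemma fmx_pow_mulv_cvg (v : T -> R) s :
  (fun n => fmx_mulv (fmx_pow M n) v s) @ \oo --> \sum_u p u * v u.
Proof.
have l_lt1 : `|l| < 1.
  by rewrite ger0_norm // ltrBlDr ltrDl mulr_gt0 // ltr0n; apply/card_gt0P; exists s.
set C := 2 * \sum_w `|v w|.
have mulv_mean n : \sum_u p u * v u = \sum_x p x * fmx_mulv (fmx_pow M n) v x.
  rewrite /fmx_mulv; under [RHS]eq_bigr do rewrite mulr_sumr.
  rewrite exchange_big /=; apply: eq_bigr => u _.
  have [_ _ <-] := invariant_prob_pow n p_inv.
  by rewrite mulr_suml; apply: eq_bigr => x _; rewrite mulrA.
apply/(@cvgrPdist_le _ R^o) => e e_gt0.
have lkC_cvg : (fun k => l ^+ k * C) @ \oo --> (0 : R^o).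
  by rewrite -(mul0r C); apply: cvgMr_tmp; exact: cvg_expr.
move/(@cvgrPdist_le _ R^o)/(_ e e_gt0): lkC_cvg => [k _ /(_ k (leqnn k)) /=].
rewrite sub0r normrN ger0_norm ?mulr_ge0 ?exprn_ge0 ?sumr_ge0 // => lkC_le.
have [lo [hi [width v_in]]] := doeblin_contraction k v.
exists (k * N)%N => // n /= le_n; apply: le_trans lkC_le; apply: le_trans width.
have stays_in x : lo <= fmx_mulv (fmx_pow M n) v x <= hi.
  rewrite -(subnK le_n) fmx_mulv_powD; apply: convex_comb_bounds => //.
  - by case: (stochastic_pow (n - k * N) M_stoch).
  - by case: (stochastic_pow (n - k * N) M_stoch) => _; apply.
have mean_in : lo <= \sum_u p u * v u <= hi.
  by rewrite (mulv_mean n); case: p_inv => p_ge0 p1 _; apply: convex_comb_bounds.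
move: (stays_in s) mean_in => /andP[? ?] /andP[? ?].
by rewrite ler_norml; apply/andP; split; lra.
Qed.

End Doeblin.

Section GibbsInequality.
Variable R : realType.

Lemma ln_le_subr1 (t : R) : 0 < t -> ln t <= t - 1.
Proof.
move=> t_gt0; rewrite -ler_expR lnK ?posrE //.
by have := expR_ge1Dx (t - 1); rewrite addrC subrK.
Qed.

Lemma ln_lt_subr1 (t : R) : 0 < t -> t != 1 -> ln t < t - 1.
Proof.
move=> t_gt0 t_neq1; rewrite -ltr_expR lnK ?posrE //.
by have := @expR_gt1Dx R (t - 1); rewrite subr_eq0 addrC subrK; apply.
Qed.

Lemma gibbs_le (a b : R) : 0 <= a -> 0 <= b -> (0 < a -> 0 < b) ->
  a * (ln b - ln a) <= b - a.
Proof.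
move=> a_ge0 b_ge0 ab_gt0; have [->|a_neq0] := eqVneq a 0; first by rewrite mul0r subr0.
have a_gt0 : 0 < a by rewrite lt0r a_neq0.
have -> : b - a = a * (b / a - 1) by field.
by rewrite -ln_div ?posrE ?ab_gt0 // ler_pM2l // ln_le_subr1 // divr_gt0 ?ab_gt0.
Qed.

Lemma gibbs_lt (a b : R) : 0 <= a -> 0 <= b -> (0 < a -> 0 < b) -> a != b ->
  a * (ln b - ln a) < b - a.
Proof.
move=> a_ge0 b_ge0 ab_gt0 a_neq_b; have [a0|a_neq0] := eqVneq a 0.
  by rewrite a0 mul0r subr0 lt0r b_ge0 andbT eq_sym -a0.
have a_gt0 : 0 < a by rewrite lt0r a_neq0.
have -> : b - a = a * (b / a - 1) by field.
rewrite -ln_div ?posrE ?ab_gt0 // ltr_pM2l // ln_lt_subr1 ?divr_gt0 ?ab_gt0 //.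
by apply: contra a_neq_b => /eqP/divr1_eq ->.
Qed.

End GibbsInequality.

Section EdgeMean.
Variables (R : realType) (T : finType) (w : T -> R) (W : T -> T -> R).

Definition edge_mean (h : T -> T -> R) : R := \sum_s \sum_s' w s * W s s' * h s s'.

Lemma edge_meanD h1 h2 :
  edge_mean (fun s s' => h1 s s' + h2 s s') = edge_mean h1 + edge_mean h2.
Proof.
rewrite /edge_mean -big_split; apply: eq_bigr => s _.
by rewrite -big_split; apply: eq_bigr => s' _; rewrite mulrDr.
Qed.

Lemma edge_meanN h : edge_mean (fun s s' => - h s s') = - edge_mean h.
Proof.
rewrite /edge_mean -sumrN; apply: eq_bigr => s _.
by rewrite -sumrN; apply: eq_bigr => s' _; rewrite mulrN.
Qed.

Lemma eq_edge_mean h1 h2 : (forall s s', 0 <= W s s') ->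
  (forall s s', 0 < W s s' -> h1 s s' = h2 s s') -> edge_mean h1 = edge_mean h2.
Proof.
move=> W_ge0 eq_h; apply: eq_bigr => s _; apply: eq_bigr => s' _.
have [W0|W_neq0] := eqVneq (W s s') 0; first by rewrite W0 mulr0 !mul0r.
by rewrite eq_h // lt0r W_neq0 W_ge0.
Qed.

Lemma edge_mean_target (g : T -> R) :
  invariant_prob W w -> edge_mean (fun _ s' => g s') = \sum_s w s * g s.
Proof.
move=> [_ _ w_inv]; rewrite /edge_mean exchange_big /=.
by apply: eq_bigr => s' _; rewrite -mulr_suml w_inv.
Qed.

Lemma edge_mean_coboundary (g : T -> R) :
  stochastic W -> invariant_prob W w -> edge_mean (fun s s' => g s' - g s) = 0.
Proof.
move=> [_ W1] w_inv.
rewrite (edge_meanD (fun _ s' => g s') (fun s _ => - g s)) edge_meanN edge_mean_target //.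
rewrite /edge_mean; under [X in _ - X]eq_bigr do rewrite -mulr_suml -mulr_sumr W1 mulr1.
exact: subrr.
Qed.

Lemma edge_mean_ln_ratio_le (V : T -> T -> R) :
  (forall s, 0 <= w s) -> stochastic W -> stochastic V ->
  (forall s s', 0 < W s s' -> 0 < V s s') ->
  edge_mean (fun s s' => ln (V s s') - ln (W s s')) <= 0.
Proof.
move=> w_ge0 [W_ge0 W1] [V_ge0 V1] WV_gt0.
apply: le_trans (_ : \sum_s w s * (\sum_s' V s s' - \sum_s' W s s') <= 0); last first.
  by rewrite big1 // => s _; rewrite V1 W1 subrr mulr0.
apply: ler_sum => s _; rewrite -sumrB mulr_sumr; apply: ler_sum => s' _.
by rewrite -mulrA; apply: ler_wpM2l => //; apply: gibbs_le => //; apply: WV_gt0.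
Qed.

Lemma edge_mean_ln_ratio_lt (V : T -> T -> R) s0 s0' :
  (forall s, 0 < w s) -> stochastic W -> stochastic V ->
  (forall s s', 0 < W s s' -> 0 < V s s') -> W s0 s0' != V s0 s0' ->
  edge_mean (fun s s' => ln (V s s') - ln (W s s')) < 0.
Proof.
move=> w_gt0 [W_ge0 W1] [V_ge0 V1] WV_gt0 WV_neq.
apply: lt_le_trans (_ : \sum_s w s * (\sum_s' V s s' - \sum_s' W s s') <= 0); last first.
  by rewrite big1 // => s _; rewrite V1 W1 subrr mulr0.
have term_le s s' : w s * W s s' * (ln (V s s') - ln (W s s')) <= w s * (V s s' - W s s').
  by rewrite -mulrA; apply: ler_wpM2l; [exact: ltW | apply: gibbs_le => //; apply: WV_gt0].
rewrite /edge_mean (bigD1 s0) //= [X in _ < X](bigD1 s0) //=; apply: ltr_leD; last first.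
  by apply: ler_sum => s _; rewrite -sumrB mulr_sumr; apply: ler_sum.
rewrite -sumrB mulr_sumr (bigD1 s0') //= [X in _ < X](bigD1 s0') //=.
apply: ltr_leD; last exact: ler_sum.
by rewrite -mulrA ltr_pM2l //; apply: gibbs_lt => //; apply: WV_gt0.
Qed.

End EdgeMean.

Section CoordinateChains.
Variables (R : realType) (E1 E2 : finType).
Implicit Types (w : E1 * E2 -> R) (W : E1 * E2 -> E1 * E2 -> R).

Lemma sum_pair (F : E1 * E2 -> R) : \sum_s F s = \sum_x \sum_y F (x, y).
Proof. by rewrite (pair_bigA _ (fun x y => F (x, y))); apply: eq_bigr => -[]. Qed.

Lemma sum_pair_snd (F : E1 * E2 -> R) : \sum_s F s = \sum_y \sum_x F (x, y).
Proof. by rewrite sum_pair exchange_big. Qed.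

Definition marg1 w x := \sum_y w (x, y).
Definition marg2 w y := \sum_x w (x, y).

Definition flow1 w W x x' := \sum_y \sum_y' w (x, y) * W (x, y) (x', y').
Definition flow2 w W y y' := \sum_x \sum_x' w (x, y) * W (x, y) (x', y').

Definition prod_law (a : E1 -> R) (b : E2 -> R) s := a s.1 * b s.2.
Definition prod_kernel (A : E1 -> E1 -> R) (B : E2 -> E2 -> R) s s' :=
  A s.1 s'.1 * B s.2 s'.2.

Lemma edge_mean_fst w W (h : E1 -> E1 -> R) :
  edge_mean w W (fun s s' => h s.1 s'.1) = \sum_x \sum_x' flow1 w W x x' * h x x'.
Proof.
rewrite /edge_mean sum_pair; apply: eq_bigr => x _.
under eq_bigr do rewrite sum_pair; rewrite exchange_big /=; apply: eq_bigr => x' _.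
by rewrite /flow1 mulr_suml; apply: eq_bigr => y _; rewrite mulr_suml.
Qed.

Lemma edge_mean_snd w W (h : E2 -> E2 -> R) :
  edge_mean w W (fun s s' => h s.2 s'.2) = \sum_y \sum_y' flow2 w W y y' * h y y'.
Proof.
rewrite /edge_mean sum_pair_snd; apply: eq_bigr => y _.
under eq_bigr do rewrite sum_pair_snd; rewrite exchange_big /=; apply: eq_bigr => y' _.
by rewrite /flow2 mulr_suml; apply: eq_bigr => x _; rewrite mulr_suml.
Qed.

Lemma sum_prod_marg w (g : E1 -> E2 -> R) :
  \sum_s \sum_u w s * w u * g s.1 u.2 = \sum_s prod_law (marg1 w) (marg2 w) s * g s.1 s.2.
Proof.
rewrite sum_pair [RHS]sum_pair; apply: eq_bigr => x _.
under eq_bigr do rewrite sum_pair_snd; rewrite exchange_big /=; apply: eq_bigr => y' _.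
rewrite /prod_law /marg1 /marg2 /= -mulrA mulr_suml; apply: eq_bigr => y _.
by rewrite mulr_suml mulr_sumr; apply: eq_bigr => x' _; rewrite mulrA.
Qed.

Section ProductChain.
Variables (A : E1 -> E1 -> R) (B : E2 -> E2 -> R) (a : E1 -> R) (b : E2 -> R).
Hypotheses (A_stoch : stochastic A) (B_stoch : stochastic B)
  (a_inv : invariant_prob A a) (b_inv : invariant_prob B b).

Let sum_mul (I J : finType) (u : I -> R) (v : J -> R) :
  \sum_i \sum_j u i * v j = (\sum_i u i) * (\sum_j v j).
Proof. by rewrite mulr_suml; apply: eq_bigr => i _; rewrite mulr_sumr. Qed.

Lemma prod_kernel_stochastic : stochastic (prod_kernel A B).
Proof.
case: A_stoch B_stoch => [A_ge0 A1] [B_ge0 B1]; split=> [s s'|s].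
  by rewrite mulr_ge0.
by rewrite sum_pair /prod_kernel /= sum_mul A1 B1 mulr1.
Qed.

Lemma prod_law_invariant : invariant_prob (prod_kernel A B) (prod_law a b).
Proof.
case: a_inv b_inv => [a_ge0 a1 a_st] [b_ge0 b1 b_st]; split=> [s|| s'].
- by rewrite mulr_ge0.
- by rewrite sum_pair /prod_law /= sum_mul a1 b1 mulr1.
rewrite sum_pair -[RHS]/(a s'.1 * b s'.2) -a_st -b_st mulr_suml.
apply: eq_bigr => x _; rewrite mulr_sumr; apply: eq_bigr => y _.
by rewrite /prod_law /prod_kernel /=; ring.
Qed.

Lemma flow1_prod x x' : flow1 (prod_law a b) (prod_kernel A B) x x' = a x * A x x'.
Proof.
case: B_stoch b_inv => [_ B1] [_ b1 _].
rewrite /flow1 /prod_law /prod_kernel /=.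
under eq_bigr do under eq_bigr do rewrite mulrACA.
under eq_bigr do rewrite -mulr_sumr -mulr_sumr B1 mulr1.
by rewrite -mulr_sumr b1 mulr1.
Qed.

Lemma flow2_prod y y' : flow2 (prod_law a b) (prod_kernel A B) y y' = b y * B y y'.
Proof.
case: A_stoch a_inv => [_ A1] [_ a1 _].
rewrite /flow2 /prod_law /prod_kernel /=.
under eq_bigr do under eq_bigr do rewrite mulrACA mulrC.
under eq_bigr do rewrite -mulr_sumr -mulr_sumr A1 mulr1.
by rewrite -mulr_sumr a1 mulr1.
Qed.

End ProductChain.

Definition marg_kernel1 w W x x' := flow1 w W x x' / marg1 w x.
Definition marg_kernel2 w W y y' := flow2 w W y y' / marg2 w y.

Section MarginalChains.
Variables (w : E1 * E2 -> R) (W : E1 * E2 -> E1 * E2 -> R).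
Hypotheses (W_stoch : stochastic W) (w_inv : invariant_prob W w)
  (w_gt0 : forall s, 0 < w s).

Let W_ge0 := W_stoch.1.
Let w_ge0 s := ltW (w_gt0 s).

Lemma marg1_gt0 x : 0 < marg1 w x.
Proof.
have [[_ y] _] : exists s, 0 < w s by case: w_inv => _ w1 _; apply: psumr_gt0P; rewrite ?w1.
exact: (psumr_gt0 (fun y => w_ge0 (x, y)) (w_gt0 (x, y))).
Qed.

Lemma marg2_gt0 y : 0 < marg2 w y.
Proof.
have [[x _] _] : exists s, 0 < w s by case: w_inv => _ w1 _; apply: psumr_gt0P; rewrite ?w1.
exact: (psumr_gt0 (fun x => w_ge0 (x, y)) (w_gt0 (x, y))).
Qed.

Let flow_term_ge0 s s' : 0 <= w s * W s s'.
Proof. by rewrite mulr_ge0. Qed.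

Let flow1_ge0 x x' : 0 <= flow1 w W x x'.
Proof. by do 2 (apply: sumr_ge0 => ? _); rewrite mulr_ge0. Qed.

Let flow2_ge0 y y' : 0 <= flow2 w W y y'.
Proof. by do 2 (apply: sumr_ge0 => ? _); rewrite mulr_ge0. Qed.

Lemma flow1_row x : \sum_x' flow1 w W x x' = marg1 w x.
Proof.
rewrite /flow1 exchange_big /=; apply: eq_bigr => y _.
have [_ W1] := W_stoch; rewrite -[RHS]mulr1 -(W1 (x, y)) sum_pair mulr_sumr.
by apply: eq_bigr => x' _; rewrite mulr_sumr.
Qed.

Lemma flow2_row y : \sum_y' flow2 w W y y' = marg2 w y.
Proof.
rewrite /flow2 exchange_big /=; apply: eq_bigr => x _.
have [_ W1] := W_stoch; rewrite -[RHS]mulr1 -(W1 (x, y)) sum_pair_snd mulr_sumr.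
by apply: eq_bigr => y' _; rewrite mulr_sumr.
Qed.

Lemma flow1_col x' : \sum_x flow1 w W x x' = marg1 w x'.
Proof.
rewrite /flow1 /marg1; under eq_bigr do rewrite exchange_big /=; rewrite exchange_big /=.
by apply: eq_bigr => y' _; case: w_inv => _ _ <-; rewrite sum_pair.
Qed.

Lemma flow2_col y' : \sum_y flow2 w W y y' = marg2 w y'.
Proof.
rewrite /flow2 /marg2; under eq_bigr do rewrite exchange_big /=; rewrite exchange_big /=.
by apply: eq_bigr => x' _; case: w_inv => _ _ <-; rewrite sum_pair_snd.
Qed.

Lemma marg1_mul_kernel x x' : marg1 w x * marg_kernel1 w W x x' = flow1 w W x x'.
Proof. by rewrite mulrC divfK // gt_eqF // marg1_gt0. Qed.

Lemma marg2_mul_kernel y y' : marg2 w y * marg_kernel2 w W y y' = flow2 w W y y'.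
Proof. by rewrite mulrC divfK // gt_eqF // marg2_gt0. Qed.

Lemma marg_kernel1_stochastic : stochastic (marg_kernel1 w W).
Proof.
split=> [x x'|x]; first by rewrite divr_ge0 // ltW // marg1_gt0.
by rewrite -mulr_suml flow1_row divff // gt_eqF // marg1_gt0.
Qed.

Lemma marg_kernel2_stochastic : stochastic (marg_kernel2 w W).
Proof.
split=> [y y'|y]; first by rewrite divr_ge0 // ltW // marg2_gt0.
by rewrite -mulr_suml flow2_row divff // gt_eqF // marg2_gt0.
Qed.

Lemma marg1_invariant : invariant_prob (marg_kernel1 w W) (marg1 w).
Proof.
split=> [x||x']; first exact: ltW (marg1_gt0 x).
  by case: w_inv => _ <- _; rewrite sum_pair.
by under eq_bigr do rewrite marg1_mul_kernel; rewrite flow1_col.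
Qed.

Lemma marg2_invariant : invariant_prob (marg_kernel2 w W) (marg2 w).
Proof.
split=> [y||y']; first exact: ltW (marg2_gt0 y).
  by case: w_inv => _ <- _; rewrite sum_pair_snd.
by under eq_bigr do rewrite marg2_mul_kernel; rewrite flow2_col.
Qed.

Lemma marg_kernel1_gt0 x x' y y' :
  0 < W (x, y) (x', y') -> 0 < marg_kernel1 w W x x'.
Proof.
move=> W_gt0; rewrite divr_gt0 ?marg1_gt0 //.
apply: (psumr_gt0 _ (i := y)) => [?|]; first by apply: sumr_ge0 => *; rewrite mulr_ge0.
by apply: (psumr_gt0 _ (i := y')) => [?|]; rewrite ?mulr_ge0 ?mulr_gt0.
Qed.

Lemma marg_kernel2_gt0 x x' y y' :
  0 < W (x, y) (x', y') -> 0 < marg_kernel2 w W y y'.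
Proof.
move=> W_gt0; rewrite divr_gt0 ?marg2_gt0 //.
apply: (psumr_gt0 _ (i := x)) => [?|]; first by apply: sumr_ge0 => *; rewrite mulr_ge0.
by apply: (psumr_gt0 _ (i := x')) => [?|]; rewrite ?mulr_ge0 ?mulr_gt0.
Qed.

Lemma marg_kernel1_gt0P x x' :
  0 < marg_kernel1 w W x x' -> exists y y', 0 < W (x, y) (x', y').
Proof.
rewrite -(pmulr_rgt0 _ (marg1_gt0 x)) marg1_mul_kernel.
move=> /psumr_gt0P-/(_ (fun y => sumr_ge0 _ (fun y' _ => flow_term_ge0 _ _))) [y].
move=> /psumr_gt0P-/(_ (fun y' => flow_term_ge0 _ _)) [y'].
by rewrite pmulr_rgt0 //; exists y, y'.
Qed.

Lemma marg_kernel2_gt0P y y' :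
  0 < marg_kernel2 w W y y' -> exists x x', 0 < W (x, y) (x', y').
Proof.
rewrite -(pmulr_rgt0 _ (marg2_gt0 y)) marg2_mul_kernel.
move=> /psumr_gt0P-/(_ (fun x => sumr_ge0 _ (fun x' _ => flow_term_ge0 _ _))) [x].
move=> /psumr_gt0P-/(_ (fun x' => flow_term_ge0 _ _)) [x'].
by rewrite pmulr_rgt0 //; exists x, x'.
Qed.

Lemma marg_product_flow1 x x' :
  flow1 (prod_law (marg1 w) (marg2 w))
    (prod_kernel (marg_kernel1 w W) (marg_kernel2 w W)) x x' = flow1 w W x x'.
Proof.
rewrite flow1_prod; first exact: marg1_mul_kernel.
  exact: marg_kernel2_stochastic.
exact: marg2_invariant.
Qed.

Lemma marg_product_flow2 y y' :
  flow2 (prod_law (marg1 w) (marg2 w))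
    (prod_kernel (marg_kernel1 w W) (marg_kernel2 w W)) y y' = flow2 w W y y'.
Proof.
rewrite flow2_prod; first exact: marg2_mul_kernel.
  exact: marg_kernel1_stochastic.
exact: marg1_invariant.
Qed.

End MarginalChains.
End CoordinateChains.

Lemma lagged_mean_cvg (R : realType) (E : finType) (W : E * E -> E * E -> R)
    (w : E * E -> R) (f : E -> E -> int) (N : nat) :
  stochastic W -> invariant_prob W w -> (forall a b, 0 < fmx_pow W N a b) ->
  lagged_mean W w f @ \oo --> \sum_s prod_law (marg1 w) (marg2 w) s * (f s.1 s.2)%:~R.
Proof.
move=> W_stoch w_inv WN_gt0; rewrite -(sum_prod_marg w (fun x y => (f x y)%:~R)).
pose g (s u : E * E) : R := (f s.1 u.2)%:~R.
have -> : lagged_mean W w f = fun n => \sum_s w s * fmx_mulv (fmx_pow W n) (g s) s.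
  apply/funext => n; apply: eq_bigr => s _; rewrite /fmx_mulv mulr_sumr.
  by apply: eq_bigr => u _; rewrite mulrA.
have -> : \sum_s \sum_u w s * w u * (f s.1 u.2)%:~R = \sum_s w s * \sum_u w u * g s u.
  by apply: eq_bigr => s _; rewrite mulr_sumr; apply: eq_bigr => u _; rewrite mulrA.
apply: (cvg_big (@add_continuous R^o)) => s _.
by apply: cvgMl_tmp; apply: fmx_pow_mulv_cvg W_stoch w_inv WN_gt0 _ _.
Qed.

Lemma big_ord_rot1 (V : Type) (idx : V) (op : Monoid.com_law idx) n (F : nat -> V) :
  \big[op/idx]_(k < n) F (k.+1 %% n)%N = \big[op/idx]_(k < n) F k.
Proof. by rewrite [RHS](reindex_inj (@ordS_inj n)). Qed.

Section CycleProducts.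
Variables (R : realType) (T : finType).

Definition cycle_prod (A : T -> T -> R) n (x : nat -> T) : R :=
  \prod_(k < n) A (x k) (x (k.+1 %% n)%N).

Lemma cycle_prod_shift A n x :
  cycle_prod A n (fun k => x ((k + 1) %% n)%N) = cycle_prod A n x.
Proof.
rewrite /cycle_prod -[RHS](big_ord_rot1 _ n (fun j => A (x j) (x (j.+1 %% n)%N))).
by apply: eq_bigr => k _; rewrite !addn1.
Qed.

Lemma cycle_prod_gt0 A n x : is_cycle A n x -> 0 < cycle_prod A n x.
Proof. by move=> [_ x_cyc]; apply: prodr_gt0 => k _; apply: x_cyc. Qed.

End CycleProducts.

Lemma cycle_prod_kernel (R : realType) (E1 E2 : finType) (A : E1 -> E1 -> R)
    (B : E2 -> E2 -> R) n x y :
  cycle_prod (prod_kernel A B) n (fun k => (x k, y k)) = cycle_prod A n x * cycle_prod B n y.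
Proof. exact: big_split. Qed.

Section TiltedChain.
Variables (R : realType) (E : finType) (P Q : E -> E -> R) (f : E -> E -> int)
  (theta : R) (r w : E * E -> R).
Hypotheses (P_stoch : stochastic P) (Q_stoch : stochastic Q) (theta_gt0 : 0 < theta)
  (r_gt0 : forall s, 0 < r s)
  (r_eigen : forall s, \sum_s' Phi P Q f theta s s' * r s' = r s).

Local Notation M := (tilted P Q f theta r).
Local Notation F s := ((f s.1 s.2)%:~R : R).

Lemma tiltedE s s' :
  M s s' = r s' / r s * expR (theta * F s') * P s.1 s'.1 * Q s.2 s'.2.
Proof. by rewrite /tilted /Phi !mulrA. Qed.

Let P_ge0 := P_stoch.1.
Let Q_ge0 := Q_stoch.1.

Let tilting_gt0 s s' : 0 < r s' / r s * expR (theta * F s').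
Proof. by rewrite mulr_gt0 ?divr_gt0 ?expR_gt0. Qed.

Lemma tilted_gt0 s s' : (0 < M s s') = (0 < P s.1 s'.1) && (0 < Q s.2 s'.2).
Proof.
have c_ge0 := ltW (tilting_gt0 s s').
rewrite tiltedE (mulr_ge0_gt0 (mulr_ge0 c_ge0 (P_ge0 _ _)) (Q_ge0 _ _)).
by rewrite (mulr_ge0_gt0 c_ge0 (P_ge0 _ _)) tilting_gt0.
Qed.

Lemma tilted_stochastic : stochastic M.
Proof.
split=> [s s'|s].
  by rewrite tiltedE 2?mulr_ge0 // ltW // tilting_gt0.
have -> : \sum_s' M s s' = (\sum_s' Phi P Q f theta s s' * r s') / r s.
  by rewrite mulr_suml; apply: eq_bigr => s' _; rewrite /tilted mulrAC [r s' * _]mulrC.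
by rewrite r_eigen divff // lt0r_neq0.
Qed.

Lemma tilted_pow_gt0 n s s' :
  0 < fmx_pow P n s.1 s'.1 -> 0 < fmx_pow Q n s.2 s'.2 -> 0 < fmx_pow M n s s'.
Proof.
elim: n s' => [|n IH] s' /=.
  rewrite /fmx_one; case: (s.1 =P s'.1) => [e1|]; last by rewrite ltxx.
  case: (s.2 =P s'.2) => [e2 _ _|]; last by rewrite ltxx.
  by rewrite (surjective_pairing s) e1 e2 -surjective_pairing eqxx.
move=> /psumr_gt0P-/(_ (fun u => mulr_ge0 (fmx_pow_ge0 _ _ _ P_ge0) (P_ge0 _ _))) [u].
rewrite mulr_ge0_gt0 ?fmx_pow_ge0 // => /andP[Pn_gt0 P_gt0].
move=> /psumr_gt0P-/(_ (fun v => mulr_ge0 (fmx_pow_ge0 _ _ _ Q_ge0) (Q_ge0 _ _))) [v].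
rewrite mulr_ge0_gt0 ?fmx_pow_ge0 // => /andP[Qn_gt0 Q_gt0].
apply: (psumr_gt0 _ (i := (u, v))) => [z|].
  by rewrite mulr_ge0 ?fmx_pow_ge0 //; apply: tilted_stochastic.1.
by rewrite mulr_gt0 ?IH // tilted_gt0 P_gt0 Q_gt0.
Qed.

Lemma ln_tilted s s' : 0 < M s s' -> ln (M s s') =
  ln (r s') - ln (r s) + theta * F s' + ln (P s.1 s'.1) + ln (Q s.2 s'.2).
Proof.
rewrite tilted_gt0 => /andP[P_gt0 Q_gt0].
have r_pos s0 : r s0 \is Num.pos by rewrite posrE.
rewrite tiltedE !lnM ?posrE ?mulr_gt0 ?tilting_gt0 ?divr_gt0 ?invr_gt0 ?expR_gt0 //.
by rewrite lnV ?r_pos // expRK.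
Qed.

Lemma cycle_prod_tilted n (x y : nat -> E) :
  cycle_prod M n (fun k => (x k, y k)) =
  expR (theta * \sum_(k < n) (f (x k) (y k))%:~R) * (cycle_prod P n x * cycle_prod Q n y).
Proof.
pose rho k := r (x k, y k); pose phi k := theta * (f (x k) (y k))%:~R.
rewrite /cycle_prod; under eq_bigr do rewrite tiltedE.
rewrite !big_split /= prodfV (big_ord_rot1 _ n rho) divff; last first.
  by apply: lt0r_neq0; apply: prodr_gt0 => k _; apply: r_gt0.
by rewrite mul1r (big_ord_rot1 _ n (expR \o phi)) /= -expR_sum -mulr_sumr mulrA.
Qed.

Hypotheses (P_irr : irreducible P) (P_aper : aperiodic P)
  (Q_irr : irreducible Q) (Q_aper : aperiodic Q).

Lemma tilted_primitive : exists N, forall s s', 0 < fmx_pow M N s s'.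
Proof.
have [NP NP_gt0] := irreducible_aperiodic_pow_gt0 P_ge0 P_irr P_aper.
have [NQ NQ_gt0] := irreducible_aperiodic_pow_gt0 Q_ge0 Q_irr Q_aper.
exists (maxn NP NQ) => s s'.
by apply: tilted_pow_gt0; [apply: NP_gt0; rewrite leq_maxl | apply: NQ_gt0; rewrite leq_maxr].
Qed.

Hypothesis w_inv : invariant_prob M w.

Lemma tilted_invariant_gt0 s : 0 < w s.
Proof.
have [N MN_gt0] := tilted_primitive.
have [w_ge0 w1 _] := w_inv.
have [u w_u_gt0] : exists u, 0 < w u by apply: psumr_gt0P; rewrite ?w1.
have [_ _ <-] := invariant_prob_pow N w_inv.
apply: (psumr_gt0 _ (i := u)); last exact: mulr_gt0.
by move=> z; rewrite mulr_ge0 // fmx_pow_ge0 //; apply: tilted_stochastic.1.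
Qed.

Let A := marg_kernel1 w M.
Let B := marg_kernel2 w M.
Let K := prod_kernel A B.
Let lam := prod_law (marg1 w) (marg2 w).

Let M_stoch := tilted_stochastic.
Let w_gt0 := tilted_invariant_gt0.

Let K_stoch : stochastic K.
Proof.
apply: prod_kernel_stochastic; first exact: marg_kernel1_stochastic.
exact: marg_kernel2_stochastic.
Qed.

Let lam_inv : invariant_prob K lam.
Proof. by apply: prod_law_invariant; [apply: marg1_invariant | apply: marg2_invariant]. Qed.

Let lam_gt0 s : 0 < lam s.
Proof. by rewrite mulr_gt0 ?(marg1_gt0 w_inv w_gt0) ?(marg2_gt0 w_inv w_gt0). Qed.

Let K_gt0 s s' : (0 < K s s') = (0 < M s s').
Proof.
have [[A_ge0 _] [B_ge0 _]] : stochastic A /\ stochastic B.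
  by split; [apply: marg_kernel1_stochastic | apply: marg_kernel2_stochastic].
rewrite /K /prod_kernel mulr_ge0_gt0 //; apply/andP/idP => [[]|M_gt0].
  move=> /(marg_kernel1_gt0P M_stoch w_inv w_gt0) [y [y' M1_gt0]].
  move=> /(marg_kernel2_gt0P M_stoch w_inv w_gt0) [x [x' M2_gt0]].
  move: M1_gt0 M2_gt0; rewrite !tilted_gt0 => /andP[P_gt0 _] /andP[_ Q_gt0].
  exact/andP.
rewrite [s]surjective_pairing [s']surjective_pairing in M_gt0.
split; first exact: (marg_kernel1_gt0 M_stoch w_inv w_gt0 M_gt0).
exact: (marg_kernel2_gt0 M_stoch w_inv w_gt0 M_gt0).
Qed.

Let C := \sum_x \sum_x' flow1 w M x x' * (ln (P x x') - ln (A x x')) +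
  \sum_y \sum_y' flow2 w M y y' * (ln (Q y y') - ln (B y y')).

Lemma edge_mean_ln_tilted_ratio (u : E * E -> R) (U : E * E -> E * E -> R) :
  stochastic U -> invariant_prob U u -> (forall s s', 0 < U s s' -> 0 < M s s') ->
  flow1 u U =2 flow1 w M -> flow2 u U =2 flow2 w M ->
  edge_mean u U (fun s s' => ln (M s s') - ln (K s s')) = theta * \sum_s u s * F s + C.
Proof.
move=> U_stoch u_inv UM_gt0 flow1E flow2E.
pose cob s s' := ln (r s') - ln (r s).
pose tilt (s s' : E * E) := theta * F s'.
pose hx x x' := ln (P x x') - ln (A x x').
pose hy y y' := ln (Q y y') - ln (B y y').
pose h s s' := cob s s' + tilt s s' + hx s.1 s'.1 + hy s.2 s'.2.
rewrite (@eq_edge_mean _ _ _ _ _ h U_stoch.1) => [|s s' /UM_gt0 M_gt0]; last first.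
  have := M_gt0; rewrite -K_gt0 mulr_ge0_gt0 ?(marg_kernel1_stochastic M_stoch w_inv w_gt0).1
    ?(marg_kernel2_stochastic M_stoch w_inv w_gt0).1 // => /andP[A_gt0 B_gt0].
  by rewrite ln_tilted // /K /prod_kernel lnM ?posrE // /h /cob /tilt /hx /hy; ring.
rewrite /h (edge_meanD _ _ (fun s s' => cob s s' + tilt s s' + hx s.1 s'.1)).
rewrite (edge_meanD _ _ (fun s s' => cob s s' + tilt s s')) (edge_meanD _ _ (cob)).
rewrite edge_mean_coboundary // edge_mean_target // edge_mean_fst edge_mean_snd.
rewrite add0r; under eq_bigr do rewrite mulrCA.
rewrite -mulr_sumr /C addrA; congr (_ + _ + _); apply: eq_bigr => ? _.
  by apply: eq_bigr => ? _; rewrite flow1E.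
by apply: eq_bigr => ? _; rewrite flow2E.
Qed.

Lemma marg_product_neq_tilted :
  (exists n (x y : nat -> E), is_cycle P n x /\ is_cycle Q n y /\
     \sum_(k < n) f (x k) (y k) <> \sum_(k < n) f (x k) (y ((k + 1) %% n)%N)) ->
  exists s s', K s s' != M s s'.
Proof.
move=> [n [x [y [x_cyc [y_cyc f_neq]]]]]; apply: contrapT => K_eq_M.
have KM s s' : K s s' = M s s'.
  by apply/eqP/negPn/negP => K_neq_M; apply: K_eq_M; exists s, s'.
have cycle_prodM z :
    cycle_prod M n (fun k => (x k, z k)) = cycle_prod A n x * cycle_prod B n z.
  by rewrite -cycle_prod_kernel; apply: eq_bigr => k _; rewrite -KM.
have := cycle_prodM (fun k => y ((k + 1) %% n)%N).
rewrite cycle_prod_shift -cycle_prodM !cycle_prod_tilted cycle_prod_shift.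
have PQ_gt0 := mulr_gt0 (cycle_prod_gt0 x_cyc) (cycle_prod_gt0 y_cyc).
move=> /(mulIf (lt0r_neq0 PQ_gt0))/expR_inj/(mulfI (lt0r_neq0 theta_gt0)).
by rewrite -!rmorph_sum => /intr_inj ?; apply: f_neq.
Qed.

Lemma marg_product_mean_lt :
  (exists n (x y : nat -> E), is_cycle P n x /\ is_cycle Q n y /\
     \sum_(k < n) f (x k) (y k) <> \sum_(k < n) f (x k) (y ((k + 1) %% n)%N)) ->
  \sum_s lam s * F s < \sum_s w s * F s.
Proof.
move=> /marg_product_neq_tilted [s0 [s0' K_neq_M]].
have flow1E := marg_product_flow1 M_stoch w_inv w_gt0.
have flow2E := marg_product_flow2 M_stoch w_inv w_gt0.
have lam_mean : edge_mean lam K (fun s s' => ln (M s s') - ln (K s s')) < 0.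
  by apply: edge_mean_ln_ratio_lt K_neq_M => // s s'; rewrite K_gt0.
have w_mean : 0 <= edge_mean w M (fun s s' => ln (M s s') - ln (K s s')).
  have -> : edge_mean w M (fun s s' => ln (M s s') - ln (K s s')) =
            - edge_mean w M (fun s s' => ln (K s s') - ln (M s s')).
    by rewrite -edge_meanN; apply: eq_bigr => s _; apply: eq_bigr => s' _; rewrite opprB.
  rewrite oppr_ge0; apply: edge_mean_ln_ratio_le => // [s|s s']; first exact: ltW.
  by rewrite K_gt0.
rewrite (edge_mean_ln_tilted_ratio K_stoch lam_inv _ flow1E flow2E) in lam_mean; last first.
  by move=> s s'; rewrite K_gt0.
rewrite (edge_mean_ln_tilted_ratio M_stoch w_inv) // in w_mean.
by rewrite -(ltr_pM2l theta_gt0); lra.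
Qed.

End TiltedChain.

Theorem lemma5p9 (R : realType) (E : finType) (P Q : E -> E -> R)
  (f : E -> E -> int) (piP piQ : E -> R) (thetas : R)
  (rs pis : (E * E)%type -> R) :
  stochastic P -> irreducible P -> aperiodic P ->
  stochastic Q -> irreducible Q -> aperiodic Q ->
  invariant_prob P piP -> invariant_prob Q piQ ->
  \big[gcdn/0%N]_(s : E * E) `|f s.1 s.2|%N = 1%N ->
  (* mu = pi(f) < 0, pi = piP (x) piQ *)
  \sum_(s : E * E) piP s.1 * piQ s.2 * (f s.1 s.2)%:~R < 0 ->
  (* (C1) *)
  (exists (n : nat) (x y : nat -> E), is_cycle P n x /\ is_cycle Q n y /\
     (0 < \sum_(k < n) f (x k) (y k))%R) ->
  (* (C2) *)
  (forall T : nat, (1 <= T)%N ->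
     exists (n : nat) (x y : nat -> E), is_cycle P n x /\ is_cycle Q n y /\
       \sum_(k < n) f (x k) (y k) <> \sum_(k < n) f (x k) (y ((k + T) %% n)%N)) ->
  (* theta_star : the unique positive solution of phi(theta) = 1 *)
  0 < thetas -> spectral_radius (Phi P Q f thetas) = 1 ->
  (forall theta : R, 0 < theta -> spectral_radius (Phi P Q f theta) = 1 ->
     theta = thetas) ->
  (* r_star : positive right eigenvector of Phi(theta_star) for eigenvalue 1 *)
  (forall s, 0 < rs s) ->
  (forall s, \sum_(s' : E * E) Phi P Q f thetas s s' * rs s' = rs s) ->
  (* pi_star : invariant probability vector of R_star *)
  invariant_prob (tilted P Q f thetas rs) pis ->
  let muT := lagged_mean (tilted P Q f thetas rs) pis f in
  let pi1 := fun x : E => \sum_(y : E) pis (x, y) in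
  let pi2 := fun y : E => \sum_(x : E) pis (x, y) in
  let mu_inf := \sum_(s : E * E) pi1 s.1 * pi2 s.2 * (f s.1 s.2)%:~R in
  muT @ \oo --> mu_inf /\
  mu_inf < \sum_(s : E * E) pis s * (f s.1 s.2)%:~R.
Proof.
(* The gcd condition, mu < 0, (C1) and the spectral characterisation of theta*
   only guarantee that theta*, r* and pi* exist; their defining equations suffice. *)
move=> P_stoch P_irr P_aper Q_stoch Q_irr Q_aper _ _ _ _ _ C2 theta_gt0 _ _
  r_gt0 r_eigen pis_inv muT pi1 pi2 mu_inf.
have M_stoch := tilted_stochastic P_stoch Q_stoch r_gt0 r_eigen.
have [N MN_gt0] := tilted_primitive P_stoch Q_stoch r_gt0 r_eigen P_irr P_aper Q_irr Q_aper.
split; first exact: lagged_mean_cvg M_stoch pis_inv MN_gt0.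
exact: marg_product_mean_lt P_stoch Q_stoch theta_gt0 r_gt0 r_eigen
  P_irr P_aper Q_irr Q_aper pis_inv (C2 1%N isT).
Qed.
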